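(* Let $A\in\mathbb{R}^{n_x\times n_x}$, $B\in\mathbb{R}^{n_x\times n_u}$, $C\in\mathbb{R}^{n_y\times n_x}$ and $D\in\mathbb{R}^{n_y\times n_u}$. Let $0<\mu_u\le\nu_u$ and $0<\mu_y\le\nu_y$, and set $\alpha_u=\frac{\nu_u+\mu_u}{2}$, $\beta_u=\frac{\nu_u-\mu_u}{2}$, $\alpha_y=\frac{\nu_y+\mu_y}{2}$, $\beta_y=\frac{\nu_y-\mu_y}{2}$. Suppose the following two LMIs are feasible. (a) There exist a symmetric $P\succ0$, $Y\in\mathbb{R}^{n_x\times n_x}$, $X\in\mathbb{R}^{n_u\times n_x}$, $\sigma>0$ and $\rho_c\in(0,1)$ with $$\begin{bmatrix}(1-\rho_c)P-\sigma BB^\mathsf{T} & AY+\alpha_uBX & 0\\ \star & Y^\mathsf{T}+Y-P & \beta_uX^\mathsf{T}\\ \star&\star&\sigma I\end{bmatrix}\succ0.$$ Set $K=XY^{-1}$. (b) There exist a symmetric $Q\succ0$, $U\in\mathbb{R}^{n_x\times n_x}$, $V\in\mathbb{R}^{n_x\times n_y}$, $\eta>0$ and $\rho_o\in(0,1)$ with $$\begin{bmatrix}(1-\rho_o)Q-\eta C^\mathsf{T}C & (UA+\alpha_yVC)^\mathsf{T} & 0\\ \star & U+U^\mathsf{T}-Q & \beta_yV\\ \star&\star&\eta I\end{bmatrix}\succ0.$$ Set $L=U^{-1}V$. Let $\mathcal{S}_u:\mathbb{R}^{n_u}\to\mathbb{R}^{n_u}$ be continuously differentiable with $\mathcal{S}_u(0)=0$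 and $\|\mathcal{J}^u(v)-\alpha_uI\|\le\beta_u$ for all $v$. Let $\mathcal{S}_y:\mathbb{R}^{n_y}\to\mathbb{R}^{n_y}$ be continuously differentiable with $\|\mathcal{J}^y(z)-\alpha_yI\|\le\beta_y$ for all $z$. Consider the closed-loop system $$x_{k+1}=Ax_k+B\mathcal{S}_u(u_k),\quad \hat x_{k+1}=A\hat x_k+B\mathcal{S}_u(u_k)+L(\hat y_k-y_k),$$ $$y_k=\mathcal{S}_y(Cx_k+D\mathcal{S}_u(u_k)),\quad \hat y_k=\mathcal{S}_y(C\hat x_k+D\mathcal{S}_u(u_k)),\quad u_k=K\hat x_k.$$ Then this closed-loop system is globally exponentially stable. That is, there exist constants $c>0$ and $\lambda\in(0,1)$ such that for all initial conditions $x_0,\hat x_0$ and all $k\ge0$, $$\|x_k\|+\|\hat x_k-x_k\|\le c\,\lambda^k\big(\|x_0\|+\|\hat x_0-x_0\|\big).$$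
   Context: $\|\cdot\|$ denotes the Euclidean norm and the induced spectral matrix norm. $M\succ0$ means $M$ is symmetric positive definite, and $\star$ denotes the blocks determined by symmetry. $\mathcal{J}^u$ and $\mathcal{J}^y$ denote the Jacobians of $\mathcal{S}_u$ and $\mathcal{S}_y$. The Jacobian conditions are the uncertainty-set description the paper uses for bi-Lipschitz scaffolding nonlinearities; in the scalar case they are equivalent to the derivative lying in $[\mu,\nu]$. *)

From HB Require Import structures.
From mathcomp Require Import all_boot all_order all_algebra.
From mathcomp Require Import all_classical all_reals all_analysis.
Set Implicit Arguments. Unset Strict Implicit. Unset Printing Implicit Defensive.
Import Order.TTheory GRing.Theory Num.Theory.
Import numFieldNormedType.Exports.
Local Open Scope ring_scope.

Definition enorm (R : realType) n (v : 'cV[R]_n) : R :=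
  Num.sqrt (\sum_(i < n) v i 0 ^+ 2).

(* ||M|| <= b for the spectral (Euclidean-induced) matrix norm:
   ||M w|| <= b ||w|| for every vector w. *)
Definition spec_norm_le (R : realType) m n (M : 'M[R]_(m, n)) (b : R) : Prop :=
  forall w : 'cV[R]_n, enorm (M *m w) <= b * enorm w.

Definition posdef (R : realType) n (M : 'M[R]_n) : Prop :=
  M^T = M /\ forall v : 'cV[R]_n, v != 0 -> 0 < (v^T *m M *m v) 0 0.

Definition jac (R : realType) n m (f : 'cV[R]_n -> 'cV[R]_m) (v : 'cV[R]_n)
  : 'M[R]_(m, n) :=
  \matrix_(i < m, j < n) ('d f v (delta_mx j 0 : 'cV[R]_n)) i 0.

Definition C1 (R : realType) n m (f : 'cV[R]_n -> 'cV[R]_m) : Prop :=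
  (forall v, differentiable f v) /\ continuous (jac f).

(* Symmetric 3x3 block matrix [[M11, M12, M13]; [*, M22, M23]; [*, *, M33]],
   the starred blocks being the transposes determined by symmetry. *)
Definition sym3 (R : realType) p q r (M11 : 'M[R]_p) (M12 : 'M[R]_(p, q))
  (M13 : 'M[R]_(p, r)) (M22 : 'M[R]_q) (M23 : 'M[R]_(q, r)) (M33 : 'M[R]_r)
  : 'M[R]_(p + (q + r)) :=
  block_mx M11 (row_mx M12 M13)
           (col_mx M12^T M13^T) (block_mx M22 M23 M23^T M33).

From HB Require Import structures.
From mathcomp Require Import all_boot all_order all_algebra.
From mathcomp Require Import all_classical all_reals all_analysis.
From mathcomp Require Import ring lra.
Import Order.TTheory GRing.Theory Num.Theory.
Import numFieldNormedType.Exports.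
Set Implicit Arguments. Unset Strict Implicit. Unset Printing Implicit Defensive.
Local Open Scope ring_scope.

(* LMI (a) is the dual form of a Lyapunov inequality for the state feedback:
   evaluated at suitable test vectors, it makes [V x = x^T P^-1 x] decrease by the
   factor [1 / (1 + rho_c)] along [x+ = A x + B d] for every [d] in the sector of
   centre [alpha_u K x] and radius [beta_u |K x|]. Likewise LMI (b) makes
   [W e = e^T Q e] contract by [1 - rho_o] along the estimation error dynamics.
   The Jacobian bounds and the mean value theorem place the increments of [Su]
   and [Sy] in these sectors. The actual input [Su (K xh)] differs from the
   sector-conformal [Su (K x)] by a term bounded by [|xh - x|], so [V + gam W] is
   a Lyapunov function of the cascade for [gam] large enough; its geometric decay
   and the quadratic bounds on [P^-1] and [Q] give the exponential estimate. *)

Section InnerProduct.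
Variable R : realType.
Implicit Types (n : nat) (a : R).

Definition vdot n (u v : 'cV[R]_n) : R := (u^T *m v) 0 0.
Definition sqnorm n (v : 'cV[R]_n) : R := vdot v v.
Definition qform n (M : 'M[R]_n) (v : 'cV[R]_n) : R := vdot v (M *m v).

Lemma vdotE n (u v : 'cV[R]_n) : vdot u v = \sum_(i < n) u i 0 * v i 0.
Proof. by rewrite /vdot mxE; apply: eq_bigr => i _; rewrite mxE. Qed.

Lemma vdotC n (u v : 'cV[R]_n) : vdot u v = vdot v u.
Proof. by rewrite !vdotE; apply: eq_bigr => i _; rewrite mulrC. Qed.

Lemma vdotDl n (u w v : 'cV[R]_n) : vdot (u + w) v = vdot u v + vdot w v.
Proof. by rewrite /vdot linearD /= mulmxDl mxE. Qed.

Lemma vdotDr n (u w v : 'cV[R]_n) : vdot v (u + w) = vdot v u + vdot v w.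
Proof. by rewrite /vdot mulmxDr mxE. Qed.

Lemma vdotZl n a (u v : 'cV[R]_n) : vdot (a *: u) v = a * vdot u v.
Proof. by rewrite /vdot linearZ /= -scalemxAl mxE. Qed.

Lemma vdotZr n a (u v : 'cV[R]_n) : vdot u (a *: v) = a * vdot u v.
Proof. by rewrite /vdot -scalemxAr mxE. Qed.

Lemma vdotNl n (u v : 'cV[R]_n) : vdot (- u) v = - vdot u v.
Proof. by rewrite -scaleN1r vdotZl mulN1r. Qed.

Lemma vdotNr n (u v : 'cV[R]_n) : vdot u (- v) = - vdot u v.
Proof. by rewrite -scaleN1r vdotZr mulN1r. Qed.

Lemma vdotBl n (u w v : 'cV[R]_n) : vdot (u - w) v = vdot u v - vdot w v.
Proof. by rewrite vdotDl vdotNl. Qed.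

Lemma vdotBr n (u w v : 'cV[R]_n) : vdot v (u - w) = vdot v u - vdot v w.
Proof. by rewrite vdotDr vdotNr. Qed.

Lemma vdot0l n (v : 'cV[R]_n) : vdot 0 v = 0.
Proof. by rewrite vdotE big1 // => i _; rewrite mxE mul0r. Qed.

Lemma vdot0r n (v : 'cV[R]_n) : vdot v 0 = 0.
Proof. by rewrite vdotC vdot0l. Qed.

Lemma vdot_mulmxr m n (M : 'M[R]_(m, n)) u v : vdot u (M *m v) = vdot (M^T *m u) v.
Proof. by rewrite /vdot trmx_mul trmxK mulmxA. Qed.

Lemma vdot_mulmxl m n (M : 'M[R]_(m, n)) u v : vdot (M *m u) v = vdot u (M^T *m v).
Proof. by rewrite vdot_mulmxr trmxK. Qed.

Lemma sqnorm_ge0 n (v : 'cV[R]_n) : 0 <= sqnorm v.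
Proof. by rewrite /sqnorm vdotE sumr_ge0 // => i _; rewrite -expr2 sqr_ge0. Qed.

Lemma sqnorm_eq0 n (v : 'cV[R]_n) : (sqnorm v == 0) = (v == 0).
Proof.
apply/idP/eqP => [|->]; last by rewrite /sqnorm vdot0l.
rewrite /sqnorm vdotE psumr_eq0 => [/allP v0|i _]; last by rewrite -expr2 sqr_ge0.
apply/matrixP => i j; rewrite ord1 mxE.
by have := v0 i (mem_index_enum i); rewrite -expr2 sqrf_eq0 => /eqP.
Qed.

Lemma sqnormZ n a (v : 'cV[R]_n) : sqnorm (a *: v) = a ^+ 2 * sqnorm v.
Proof. by rewrite /sqnorm vdotZl vdotZr mulrA expr2. Qed.

Lemma sqnorm_mulmx m n (M : 'M[R]_(m, n)) v : sqnorm (M *m v) = qform (M^T *m M) v.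
Proof. by rewrite /sqnorm /qform vdot_mulmxl mulmxA. Qed.

Lemma enorm_sqr n (v : 'cV[R]_n) : enorm v ^+ 2 = sqnorm v.
Proof.
rewrite /enorm sqr_sqrtr ?sumr_ge0 // => [|i _]; last exact: sqr_ge0.
by rewrite /sqnorm vdotE; apply: eq_bigr => i _; rewrite expr2.
Qed.

Lemma enorm_ge0 n (v : 'cV[R]_n) : 0 <= enorm v.
Proof. exact: sqrtr_ge0. Qed.

Lemma vdot_le_sqnorm n (u v : 'cV[R]_n) : 2 * vdot u v <= sqnorm u + sqnorm v.
Proof. by have := sqnorm_ge0 (u - v); rewrite /sqnorm !(vdotBl, vdotBr) (vdotC v u); lra. Qed.

Lemma sqnormD_le n (u v : 'cV[R]_n) : sqnorm (u + v) <= 2 * sqnorm u + 2 * sqnorm v.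
Proof. by have := vdot_le_sqnorm u v; rewrite /sqnorm !(vdotDl, vdotDr) (vdotC v u); lra. Qed.

Lemma cauchy_schwarz n (u v : 'cV[R]_n) : vdot u v ^+ 2 <= sqnorm u * sqnorm v.
Proof.
have [u0|u_neq0] := eqVneq u 0; first by rewrite u0 vdot0l expr0n mulr_ge0 ?sqnorm_ge0.
have u_gt0 : 0 < sqnorm u by rewrite lt_def sqnorm_eq0 u_neq0 sqnorm_ge0.
have := sqnorm_ge0 (sqnorm u *: v - vdot u v *: u).
rewrite /sqnorm !(vdotBl, vdotBr, vdotZl, vdotZr) (vdotC v u) -!/(sqnorm _) => sq_ge0.
by rewrite -(ler_pM2l u_gt0); nra.
Qed.

End InnerProduct.

Section QuadraticForm.
Variable R : realType.
Implicit Types (n : nat) (a : R).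

Lemma qform_tr n (M : 'M[R]_n) v : qform M^T v = qform M v.
Proof. by rewrite /qform vdot_mulmxr trmxK vdotC. Qed.

Lemma qformN n (M : 'M[R]_n) v : qform M (- v) = qform M v.
Proof. by rewrite /qform mulmxN vdotNl vdotNr opprK. Qed.

Lemma qformD n (M N : 'M[R]_n) v : qform (M + N) v = qform M v + qform N v.
Proof. by rewrite /qform mulmxDl vdotDr. Qed.

Lemma qformB n (M N : 'M[R]_n) v : qform (M - N) v = qform M v - qform N v.
Proof. by rewrite /qform mulmxBl vdotBr. Qed.

Lemma qformZ n a (M : 'M[R]_n) v : qform (a *: M) v = a * qform M v.
Proof. by rewrite /qform -scalemxAl vdotZr. Qed.

Lemma qform_scalar n a (v : 'cV[R]_n) : qform a%:M v = a * sqnorm v.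
Proof. by rewrite /qform mul_scalar_mx vdotZr. Qed.

Lemma qform0 n (M : 'M[R]_n) : qform M 0 = 0.
Proof. by rewrite /qform vdot0l. Qed.

Lemma qform_le_sqnorm n (M : 'M[R]_n) :
  exists2 c, 0 < c & forall v, qform M v <= c * sqnorm v.
Proof.
exists (\sum_(i < n) \sum_(j < n) `|M i j| + 1).
  by rewrite ltr_wpDl // sumr_ge0 // => i _; rewrite sumr_ge0.
move=> v; have v_le i : `|v i 0| ^+ 2 <= sqnorm v.
  rewrite real_normK ?num_real // /sqnorm vdotE (bigD1 i) //= -expr2 lerDl.
  by rewrite sumr_ge0 // => k _; rewrite -expr2 sqr_ge0.
rewrite mulrDl mul1r ler_wpDr ?sqnorm_ge0 // /qform vdotE mulr_suml.
apply: ler_sum => i _; rewrite mxE mulr_sumr mulr_suml; apply: ler_sum => j _.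
apply: le_trans (ler_norm _) _; rewrite !normrM mulrCA ler_wpM2l //.
by have := v_le i; have := v_le j; nra.
Qed.

Lemma sqnorm_mulmx_le m n (M : 'M[R]_(m, n)) :
  exists2 c, 0 < c & forall v, sqnorm (M *m v) <= c * sqnorm v.
Proof.
by have [c c_gt0 Mc] := qform_le_sqnorm (M^T *m M); exists c => // v; rewrite sqnorm_mulmx.
Qed.

(* Coercivity comes from the bound on the inverse: [0 <= qform M (invmx M w - v)]
   with [w = c^-1 v]. *)
Lemma qform_ge_sqnorm n (M : 'M[R]_n) :
  M^T = M -> M \in unitmx -> (forall v, 0 <= qform M v) ->
  exists2 m, 0 < m & forall v, m * sqnorm v <= qform M v.
Proof.
move=> M_sym M_unit M_psd; have [c c_gt0 Nc] := qform_le_sqnorm (invmx M).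
exists c^-1 => [|v]; first by rewrite invr_gt0.
set w := c^-1 *: v; have := M_psd (invmx M *m w - v).
rewrite /qform mulmxBr mulmxA mulmxV // mul1mx !(vdotBl, vdotBr).
have -> : vdot (invmx M *m w) (M *m v) = vdot w v.
  by rewrite vdot_mulmxl mulmxA trmx_inv M_sym mulVmx // mul1mx.
have := Nc w; rewrite /qform (vdotC (invmx M *m w)) (vdotC v w).
rewrite /w sqnormZ !vdotZl -/(sqnorm v) => Nw.
have : c * (c^-1 ^+ 2 * sqnorm v) = c^-1 * sqnorm v.
  by rewrite mulrA expr2 mulrA divff ?gt_eqF // mul1r.
lra.
Qed.

Lemma qform_gt0_unitmx n (M : 'M[R]_n) :
  (forall v, v != 0 -> 0 < qform M v) -> M \in unitmx.
Proof.
move=> M_pos; rewrite unitmxE unitfE -det_tr; apply/negP => /det0P [v v_neq0 vM].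
have Mv : M *m v^T = 0 by rewrite -(trmxK M) -trmx_mul vM trmx0.
have vT_neq0 : v^T != 0.
  by apply: contra v_neq0 => /eqP/(congr1 trmx); rewrite trmxK trmx0 => ->.
by have := M_pos _ vT_neq0; rewrite /qform Mv vdot0r ltxx.
Qed.

Lemma posdef_qform_gt0 n (M : 'M[R]_n) v : posdef M -> v != 0 -> 0 < qform M v.
Proof. by move=> [_ M_pos] /M_pos; rewrite /qform /vdot mulmxA. Qed.

Lemma posdef_qform_ge0 n (M : 'M[R]_n) v : posdef M -> 0 <= qform M v.
Proof.
move=> M_pd; have [->|v_neq0] := eqVneq v 0; first by rewrite qform0.
exact/ltW/posdef_qform_gt0.
Qed.

Lemma posdef_unitmx n (M : 'M[R]_n) : posdef M -> M \in unitmx.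
Proof. by move=> M_pd; apply: qform_gt0_unitmx => v; apply: posdef_qform_gt0. Qed.

Lemma qform_invmx n (M : 'M[R]_n) v :
  M \in unitmx -> qform (invmx M) v = qform M (invmx M *m v).
Proof. by move=> M_unit; rewrite /qform mulmxA mulmxV // mul1mx vdotC. Qed.

Lemma qform_add_le n (M : 'M[R]_n) eps u v :
  M^T = M -> (forall v, 0 <= qform M v) -> 0 < eps ->
  qform M (u + v) <= (1 + eps) * qform M u + (1 + eps^-1) * qform M v.
Proof.
move=> M_sym M_psd eps_gt0.
have vMu : vdot v (M *m u) = vdot u (M *m v) by rewrite vdot_mulmxr M_sym vdotC.
have := M_psd (eps *: u - v).
rewrite /qform mulmxBr mulmxDr -scalemxAr.
rewrite !(vdotBl, vdotBr, vdotDl, vdotDr, vdotZl, vdotZr) vMu.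
set a := vdot u (M *m u); set b := vdot v (M *m v); set t := vdot u (M *m v) => H.
have -> : (1 + eps^-1) * b = b + eps^-1 * b by rewrite mulrDl mul1r.
have : 2 * t <= eps * a + eps^-1 * b.
  rewrite -(ler_pM2l eps_gt0) mulrDr mulVKf ?gt_eqF //; nra.
lra.
Qed.

Lemma sym3_qform p q r (M11 : 'M[R]_p) (M12 : 'M[R]_(p, q))
  (M13 : 'M[R]_(p, r)) (M22 : 'M[R]_q) (M23 : 'M[R]_(q, r)) (M33 : 'M[R]_r) v1 v2 v3 :
  qform (sym3 M11 M12 M13 M22 M23 M33) (col_mx v1 (col_mx v2 v3)) =
  qform M11 v1 + 2 * vdot v1 (M12 *m v2) + 2 * vdot v1 (M13 *m v3)
  + qform M22 v2 + 2 * vdot v2 (M23 *m v3) + qform M33 v3.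
Proof.
have addE m k (M N : 'M[R]_(m, k)) i j : (M + N) i j = M i j + N i j by rewrite mxE.
have trE m k (M : 'M[R]_(m, k)) x y : vdot y (M^T *m x) = vdot x (M *m y).
  by rewrite vdot_mulmxr trmxK vdotC.
rewrite /qform /sym3 {1}/vdot mul_block_col !tr_col_mx.
rewrite !mul_col_mx !mul_row_col !add_col_mx !mul_row_col !mulmxDr !addE.
by rewrite -!/(vdot _ _) !trE; ring.
Qed.

Lemma sym3_qform_mid p q r (M11 : 'M[R]_p) (M12 : 'M[R]_(p, q))
  (M13 : 'M[R]_(p, r)) (M22 : 'M[R]_q) (M23 : 'M[R]_(q, r)) (M33 : 'M[R]_r) v :
  posdef (sym3 M11 M12 M13 M22 M23 M33) -> v != 0 -> 0 < qform M22 v.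
Proof.
move=> M_pd v_neq0; have : col_mx 0 (col_mx v 0) != 0 :> 'cV[R]_(p + (q + r)).
  by rewrite !col_mx_eq0 (negbTE v_neq0) andbF.
move=> /(posdef_qform_gt0 M_pd); rewrite sym3_qform !qform0 !mulmx0 !vdot0r vdot0l.
by rewrite !mulr0 !addr0 add0r.
Qed.

Lemma qform_invmx_ge n (M : 'M[R]_n) w v :
  M^T = M -> M \in unitmx -> (forall v, 0 <= qform M v) ->
  2 * vdot w v - qform M w <= qform (invmx M) v.
Proof.
move=> M_sym M_unit M_psd; have := M_psd (w - invmx M *m v).
rewrite /qform mulmxBr mulmxA mulmxV // mul1mx !(vdotBl, vdotBr).
have -> : vdot (invmx M *m v) (M *m w) = vdot v w.
  by rewrite vdot_mulmxr M_sym mulmxA mulmxV // mul1mx vdotC.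
by rewrite (vdotC v w) (vdotC (invmx M *m v) v); lra.
Qed.

End QuadraticForm.

Section MeanValue.
Variable R : realType.

Lemma diff_jac n m (f : 'cV[R]_n -> 'cV[R]_m) v h : 'd f v h = jac f v *m h.
Proof.
apply/matrixP => i j; rewrite ord1 {j}.
have -> : h = \sum_(j < n) h j 0 *: (delta_mx j 0 : 'cV[R]_n).
  apply/matrixP => a b; rewrite ord1 summxE (bigD1 a) //= !mxE eqxx /= mulr1.
  by rewrite big1 ?addr0 // => j ja; rewrite !mxE eq_sym (negbTE ja) /= mulr0.
rewrite linear_sum /= summxE mulmx_sumr summxE; apply: eq_bigr => j _.
rewrite linearZ /= -scalemxAr !mxE (bigD1 j) //= big1 ?addr0; last first.
  by move=> k kj; rewrite !mxE (negbTE kj) /= mulr0.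
by rewrite !mxE !eqxx /= mulr1 mulrC.
Qed.

Lemma is_derive_line n m (f : 'cV[R]_n -> 'cV[R]_m) (b h : 'cV[R]_n) (s : R) :
  (forall v, differentiable f v) ->
  is_derive s (1 : R) (fun t : R => f (b + t *: h)) (jac f (b + s *: h) *m h).
Proof.
move=> f_diff; set line := fun t : R => b + t *: h.
have line_is_diff : is_diff s line (0 + *:%R^~ h).
  have -> : line = cst b + *:%R^~ h by apply/funext.
  exact: is_diffD.
have f_is_diff : is_diff (line s) f ('d f (line s)) by apply: DiffDef.
have G_is_diff := is_diff_comp line_is_diff f_is_diff.
apply: DeriveDef; first exact: diff_derivable.
by rewrite deriveE // diff_val /= add0r scale1r diff_jac.
Qed.

Lemma mean_value_vdot n m (f : 'cV[R]_n -> 'cV[R]_m) (r : 'cV[R]_m) a b :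
  (forall v, differentiable f v) ->
  exists c : R, vdot r (f a - f b) = vdot r (jac f (b + c *: (a - b)) *m (a - b)).
Proof.
move=> f_diff; set h := a - b; set G := fun t : R => f (b + t *: h).
pose phi := \sum_(i < m) (fun t => r i 0 * G t i 0).
have phiE t : phi t = vdot r (G t) by rewrite /phi fct_sumE vdotE.
have phi_is_derive t : is_derive t (1 : R) phi (vdot r (jac f (b + t *: h) *m h)).
  rewrite vdotE; apply: is_derive_sum => i.
  have G_der := is_derive_line b h t f_diff.
  have Gi_der : derivable (fun t => G t i 0) t 1.
    by move/derivable_mxP: (@ex_derive _ _ _ _ _ _ _ G_der).
  apply: is_deriveZ; apply: DeriveDef => //.
  have DG : 'D_1 G t = jac f (b + t *: h) *m h by exact: derive_val.
  by rewrite -DG derive_mx ?mxE.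
have [c _ Ec] := @MVT_segment R phi _ 0 1 ler01 (fun t _ => phi_is_derive t)
  (derivable_within_continuous (fun t _ => @ex_derive _ _ _ _ _ _ _ (phi_is_derive t))).
exists c; move: Ec; rewrite !phiE /G scale1r scale0r addr0 subr0 mulr1 -vdotBr.
by have -> : b + h = a by rewrite addrC subrK.
Qed.

End MeanValue.

Section Sector.
Variable R : realType.
Implicit Types (n : nat) (al be : R).

(* The mean value theorem is applied in the direction of the deviation [r] itself. *)
Lemma jac_sector n (f : 'cV[R]_n -> 'cV[R]_n) al be :
  (forall v, differentiable f v) -> (forall v, spec_norm_le (jac f v - al%:M) be) ->
  0 <= be -> forall a b, sqnorm (f a - f b - al *: (a - b)) <= be ^+ 2 * sqnorm (a - b).
Proof.
move=> f_diff f_jac be_ge0 a b; set h := a - b; set r := f a - f b - al *: h.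
have [c Ec] := mean_value_vdot r a b f_diff; set g := (jac f (b + c *: h) - al%:M) *m h.
have r_g : sqnorm r = vdot r g.
  by rewrite /sqnorm {2}/r vdotBr Ec /g mulmxBl mul_scalar_mx vdotBr vdotZr.
have g_le : sqnorm g <= be ^+ 2 * sqnorm h.
  rewrite -!enorm_sqr -exprMn ler_pXn2r ?nnegrE ?mulr_ge0 ?enorm_ge0 //; exact: f_jac.
by have := vdot_le_sqnorm r g; lra.
Qed.

Lemma sector_sqnorm_le n (d h : 'cV[R]_n) al be :
  sqnorm (d - al *: h) <= be ^+ 2 * sqnorm h -> sqnorm d <= 2 * (al ^+ 2 + be ^+ 2) * sqnorm h.
Proof.
have := sqnormD_le (d - al *: h) (al *: h); rewrite subrK sqnormZ; lra.
Qed.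

Lemma sector_scaled_witness n (r z : 'cV[R]_n) be :
  0 <= be -> sqnorm r <= be ^+ 2 * sqnorm z -> exists s, be *: s = r /\ sqnorm s <= sqnorm z.
Proof.
move=> be_ge0 r_le; have [be0|be_neq0] := eqVneq be 0.
  exists 0; rewrite scaler0 /sqnorm vdot0l sqnorm_ge0; split => //; apply/esym/eqP.
  by rewrite -sqnorm_eq0 eq_le sqnorm_ge0 andbT; move: r_le; rewrite be0 expr0n mul0r.
exists (be^-1 *: r); rewrite scalerA divff // scale1r sqnormZ exprVn; split => //.
by rewrite ler_pdivrMl ?exprn_gt0 ?lt_def ?be_neq0.
Qed.

(* The witness is parallel to [k]; its size is controlled by Cauchy-Schwarz. *)
Lemma sector_projected_witness n (r k g : 'cV[R]_n) be :
  0 <= be -> sqnorm r <= be ^+ 2 * sqnorm k ->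
  exists s, be * vdot k s = vdot r g /\ sqnorm s <= sqnorm g.
Proof.
move=> be_ge0 r_le; have [bk0|bk_neq0] := eqVneq (be * sqnorm k) 0.
  have /eqP r0 : r == 0.
    by rewrite -sqnorm_eq0 eq_le sqnorm_ge0 andbT; move: r_le; rewrite expr2 -mulrA bk0 mulr0.
  by exists 0; rewrite r0 vdot0r vdot0l mulr0 /sqnorm vdot0l sqnorm_ge0.
have be_neq0 : be != 0 by apply: contraNneq bk_neq0 => ->; rewrite mul0r.
have k_neq0 : sqnorm k != 0 by apply: contraNneq bk_neq0 => ->; rewrite mulr0.
have k_gt0 : 0 < sqnorm k by rewrite lt_def k_neq0 sqnorm_ge0.
exists ((vdot r g / (be * sqnorm k)) *: k); rewrite vdotZr -/(sqnorm k) sqnormZ; split.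
  by field; rewrite be_neq0 k_neq0.
rewrite (_ : _ * _ = vdot r g ^+ 2 / (be ^+ 2 * sqnorm k)); last by field; rewrite be_neq0 k_neq0.
rewrite ler_pdivrMr; last by rewrite mulr_gt0 // exprn_gt0 // lt_def be_neq0.
apply: le_trans (cauchy_schwarz r g) _.
by rewrite mulrC ler_wpM2l ?sqnorm_ge0.
Qed.

End Sector.

Section LMISteps.
Variable R : realType.

(* The dual LMI is evaluated at [(P^-1 x', - Y^-1 x, s)], with [x'] the successor
   state and [s] the projected sector witness. *)
Lemma lmi_control_step nx nu (A P Y : 'M[R]_nx) (B : 'M[R]_(nx, nu)) (X : 'M[R]_(nu, nx))
  (al be sigma rho : R) x d :
  P^T = P -> P \in unitmx -> (forall v, 0 <= qform P v) -> Y \in unitmx ->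
  0 < sigma -> 0 <= be ->
  (forall v, 0 <= qform (sym3 ((1 - rho) *: P - sigma *: (B *m B^T))
               (A *m Y + al *: (B *m X)) (0 : 'M[R]_(nx, nu))
               (Y^T + Y - P) (be *: X^T) (sigma%:M : 'M[R]_nu)) v) ->
  sqnorm (d - al *: (X *m invmx Y *m x)) <= be ^+ 2 * sqnorm (X *m invmx Y *m x) ->
  (1 + rho) * qform (invmx P) (A *m x + B *m d) <= qform (invmx P) x.
Proof.
move=> P_sym P_unit P_psd Y_unit sigma_gt0 be_ge0 lmi sector.
set x' := A *m x + B *m d; set lam := invmx P *m x'; set w := invmx Y *m x.
set kx := X *m invmx Y *m x; set r := d - al *: kx; set g := B^T *m lam.
have [s [s_eq s_le]] := sector_projected_witness g be_ge0 sector.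
have Yw : Y *m w = x by rewrite mulmxA mulmxV // mul1mx.
have Xw : X *m w = kx by rewrite mulmxA.
have := lmi (col_mx lam (col_mx (- w) s)); rewrite sym3_qform.
have -> : qform ((1 - rho) *: P - sigma *: (B *m B^T)) lam
          = (1 - rho) * qform P lam - sigma * sqnorm g.
  by rewrite qformB !qformZ sqnorm_mulmx trmxK.
have -> : vdot lam ((A *m Y + al *: (B *m X)) *m - w)
          = - (vdot lam (A *m x) + al * vdot lam (B *m kx)).
  by rewrite mulmxN vdotNr mulmxDl -scalemxAl vdotDr vdotZr -!mulmxA Yw Xw.
have -> : qform (Y^T + Y - P) (- w) = 2 * vdot w x - qform P w.
  by rewrite qformN qformB qformD qform_tr /qform Yw; ring.
have -> : vdot (- w) ((be *: X^T) *m s) = - vdot r g.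
  by rewrite vdotNl -scalemxAl vdotZr -vdot_mulmxl Xw s_eq.
rewrite mul0mx vdot0r qform_scalar.
have lam_x' : vdot lam x' = vdot lam (A *m x) + al * vdot lam (B *m kx) + vdot r g.
  rewrite /g (vdot_mulmxr B^T) trmxK vdotC /r /x' mulmxBr -scalemxAr.
  by rewrite vdotDl vdotBl vdotZl !(vdotC lam); ring.
have V' : qform P lam = qform (invmx P) x' by rewrite qform_invmx.
have V'_lam : vdot lam x' = qform (invmx P) x' by rewrite /qform vdotC.
have := qform_invmx_ge w x P_sym P_unit P_psd.
have : sigma * sqnorm s <= sigma * sqnorm g by rewrite ler_pM2l.
rewrite /qform in lam_x' V' V'_lam *; nra.
Qed.

(* The LMI is evaluated at [(e, - e', s)], with [e'] the successor error and
   [be *: s] the sector deviation of the output nonlinearity. *)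
Lemma lmi_observer_step nx ny (A Q U : 'M[R]_nx) (C : 'M[R]_(ny, nx)) (V L : 'M[R]_(nx, ny))
  (al be eta rho : R) e d :
  U *m L = V -> 0 < eta -> 0 <= be ->
  (forall v, 0 <= qform (sym3 ((1 - rho) *: Q - eta *: (C^T *m C))
               (U *m A + al *: (V *m C))^T (0 : 'M[R]_(nx, ny))
               (U + U^T - Q) (be *: V) (eta%:M : 'M[R]_ny)) v) ->
  sqnorm (d - al *: (C *m e)) <= be ^+ 2 * sqnorm (C *m e) ->
  qform Q (A *m e + L *m d) <= (1 - rho) * qform Q e.
Proof.
move=> UL eta_gt0 be_ge0 lmi sector.
set e' := A *m e + L *m d; set z := C *m e; set r := d - al *: z.
have [s [s_eq s_le]] := sector_scaled_witness be_ge0 sector.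
have := lmi (col_mx e (col_mx (- e') s)); rewrite sym3_qform.
have -> : qform ((1 - rho) *: Q - eta *: (C^T *m C)) e = (1 - rho) * qform Q e - eta * sqnorm z.
  by rewrite qformB !qformZ sqnorm_mulmx.
have -> : vdot e ((U *m A + al *: (V *m C))^T *m - e')
          = - (vdot e' (U *m (A *m e)) + al * vdot e' (V *m z)).
  by rewrite mulmxN vdotNr -vdot_mulmxl vdotC mulmxDl -scalemxAl vdotDr vdotZr -!mulmxA.
have -> : qform (U + U^T - Q) (- e') = 2 * vdot e' (U *m e') - qform Q e'.
  by rewrite qformN qformB qformD qform_tr /qform; ring.
have -> : vdot (- e') ((be *: V) *m s) = - vdot e' (V *m r).
  by rewrite vdotNl -scalemxAl scalemxAr s_eq.
rewrite mul0mx vdot0r qform_scalar.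
have Ue' : vdot e' (U *m e')
            = vdot e' (U *m (A *m e)) + al * vdot e' (V *m z) + vdot e' (V *m r).
  rewrite {2}/e' mulmxDr (mulmxA U L) UL /r mulmxBr -scalemxAr.
  by rewrite !(vdotDr, vdotBr, vdotNr, vdotZr); ring.
have : eta * sqnorm s <= eta * sqnorm z by rewrite ler_pM2l.
rewrite /qform in Ue' *; lra.
Qed.

End LMISteps.

Section Decay.
Variable R : realType.

Lemma cascade_step (a b c gam v w v' w' : R) :
  0 <= a -> 0 <= c -> 0 <= gam -> 2 * b <= gam * (1 - c) -> 0 <= v -> 0 <= w ->
  v' <= a * v + b * w -> w' <= c * w ->
  v' + gam * w' <= Num.max a ((1 + c) / 2) * (v + gam * w).
Proof.
move=> a_ge0 c_ge0 gam_ge0 b_le v_ge0 w_ge0 v'_le w'_le.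
have a_le : a <= Num.max a ((1 + c) / 2) by rewrite le_max lexx.
have c_le : (1 + c) / 2 <= Num.max a ((1 + c) / 2) by rewrite le_max lexx orbT.
set th := Num.max a _ in a_le c_le *.
have : gam * w' <= gam * (c * w) by rewrite ler_wpM2l.
have : a * v <= th * v by rewrite ler_wpM2r.
have : (b + gam * c) * w <= th * gam * w.
  by rewrite ler_wpM2r // (le_trans _ (ler_wpM2r gam_ge0 c_le)) //; lra.
nra.
Qed.

Lemma geometric_decay_sum_le (a b Z : nat -> R) (m M th : R) :
  0 < m -> 0 <= M -> 0 <= th -> (forall k, 0 <= a k) -> (forall k, 0 <= b k) ->
  (forall k, m * (a k ^+ 2 + b k ^+ 2) <= Z k) -> Z 0%N <= M * (a 0%N ^+ 2 + b 0%N ^+ 2) ->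
  (forall k, Z k.+1 <= th * Z k) ->
  forall k, a k + b k <= (2 * M / m + 1) * ((1 + th) / 2) ^+ k * (a 0%N + b 0%N).
Proof.
move=> m_gt0 M_ge0 th_ge0 a_ge0 b_ge0 Z_ge Z0_le Z_step k.
set lam := (1 + th) / 2; set t := 2 * M / m.
have t_ge0 : 0 <= t by apply: divr_ge0; [apply: mulr_ge0 | apply: ltW].
have Zk : Z k <= th ^+ k * Z 0%N.
  elim: k => [|k IHk]; first by rewrite expr0 mul1r.
  by apply: le_trans (Z_step k) _; rewrite exprS -mulrA ler_wpM2l.
have th_lam : th ^+ k <= (lam ^+ k) ^+ 2.
  rewrite -exprM mulnC exprM lerXn2r ?nnegrE ?sqr_ge0 //.
  by rewrite /lam; have := sqr_ge0 (1 - th); nra.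
have t_le : t <= (t + 1) ^+ 2 by nra.
have lam_ge0 : 0 <= lam by rewrite /lam; lra.
have a0b0_ge0 : 0 <= a 0%N + b 0%N by rewrite addr_ge0.
rewrite -(@ler_pXn2r _ 2) ?nnegrE ?addr_ge0 ?mulr_ge0 ?exprn_ge0 ?addr_ge0 //.
set T := (lam ^+ k) ^+ 2 * (a 0%N + b 0%N) ^+ 2.
have T_ge0 : 0 <= T by rewrite /T mulr_ge0 ?sqr_ge0.
have -> : ((t + 1) * lam ^+ k * (a 0%N + b 0%N)) ^+ 2 = (t + 1) ^+ 2 * T.
  by rewrite /T; ring.
have sk_le : m * (a k ^+ 2 + b k ^+ 2) <= M * T.
  apply: le_trans (Z_ge k) _; apply: le_trans Zk _.
  apply: le_trans (ler_wpM2l (exprn_ge0 k th_ge0) Z0_le) _.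
  rewrite mulrCA /T ler_wpM2l //.
  apply: ler_pM; [exact: exprn_ge0 | by rewrite addr_ge0 ?sqr_ge0 | exact: th_lam |].
  by have := a_ge0 0%N; have := b_ge0 0%N; nra.
have tT : m * (t * T) = 2 * (M * T) by rewrite /t; field; rewrite gt_eqF.
have : a k ^+ 2 + b k ^+ 2 <= t * T / 2.
  by rewrite ler_pdivlMr // -(ler_pM2l m_gt0) tT (mulrC _ 2) mulrCA ler_pM2l.
have := sqr_ge0 (a k - b k); nra.
Qed.

End Decay.

Section ClosedLoop.
Variables (R : realType) (nx nu ny : nat).
Variables (A : 'M[R]_nx) (B : 'M[R]_(nx, nu)) (C : 'M[R]_(ny, nx)) (D : 'M[R]_(ny, nu)).
Variables (K : 'M[R]_(nu, nx)) (L : 'M[R]_(nx, ny)).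
Variables (Su : 'cV[R]_nu -> 'cV[R]_nu) (Sy : 'cV[R]_ny -> 'cV[R]_ny).
Variables (al_u be_u al_y be_y rho_c rho_o : R) (Pi Q : 'M[R]_nx).

Hypotheses (Pi_sym : Pi^T = Pi) (Pi_unit : Pi \in unitmx) (Pi_psd : forall v, 0 <= qform Pi v).
Hypotheses (Q_sym : Q^T = Q) (Q_unit : Q \in unitmx) (Q_psd : forall v, 0 <= qform Q v).
Hypotheses (rho_c_gt0 : 0 < rho_c) (rho_o_gt0 : 0 < rho_o) (rho_o_lt1 : rho_o < 1).
Hypothesis Su0 : Su 0 = 0.
Hypothesis Su_sector :
  forall a b, sqnorm (Su a - Su b - al_u *: (a - b)) <= be_u ^+ 2 * sqnorm (a - b).
Hypothesis Sy_sector :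
  forall a b, sqnorm (Sy a - Sy b - al_y *: (a - b)) <= be_y ^+ 2 * sqnorm (a - b).
Hypothesis control_step : forall x d,
  sqnorm (d - al_u *: (K *m x)) <= be_u ^+ 2 * sqnorm (K *m x) ->
  (1 + rho_c) * qform Pi (A *m x + B *m d) <= qform Pi x.
Hypothesis observer_step : forall e d,
  sqnorm (d - al_y *: (C *m e)) <= be_y ^+ 2 * sqnorm (C *m e) ->
  qform Q (A *m e + L *m d) <= (1 - rho_o) * qform Q e.

Definition closed_loop (x xh : nat -> 'cV[R]_nx) : Prop :=
  forall k,
    let u := K *m xh k in
    let y := Sy (C *m x k + D *m Su u) in
    let yh := Sy (C *m xh k + D *m Su u) in
    x k.+1 = A *m x k + B *m Su u /\
    xh k.+1 = A *m xh k + B *m Su u + L *m (yh - y).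

(* The controller acts on the estimate [xh = x + e]; the mismatch is absorbed
   by a Young inequality at the price of a term in the estimation error. *)
Lemma state_step_le : exists2 b, 0 <= b & forall x xh,
  qform Pi (A *m x + B *m Su (K *m xh))
  <= (1 + rho_c / 2) / (1 + rho_c) * qform Pi x + b * qform Q (xh - x).
Proof.
have [cB cB_gt0 B_le] := sqnorm_mulmx_le B; have [cK cK_gt0 K_le] := sqnorm_mulmx_le K.
have [MP MP_gt0 Pi_le] := qform_le_sqnorm Pi.
have [mQ mQ_gt0 Q_ge] := qform_ge_sqnorm Q_sym Q_unit Q_psd.
set eps := rho_c / 2; have eps_gt0 : 0 < eps by rewrite divr_gt0.
set cS := 2 * (al_u ^+ 2 + be_u ^+ 2); have cS_ge0 : 0 <= cS by rewrite mulr_ge0 ?addr_ge0 ?sqr_ge0.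
move: (ltW eps_gt0) (ltW MP_gt0) (ltW cB_gt0) (ltW cK_gt0) => eps_ge0 MP_ge0 cB_ge0 cK_ge0.
exists ((1 + eps^-1) * (MP * (cB * (cS * cK))) / mQ).
  by rewrite divr_ge0 ?mulr_ge0 ?addr_ge0 ?invr_ge0 ?sqr_ge0 // ltW.
move=> x xh; set e := xh - x; set dl := Su (K *m xh) - Su (K *m x).
have -> : A *m x + B *m Su (K *m xh) = A *m x + B *m Su (K *m x) + B *m dl.
  by rewrite /dl mulmxBr addrA addrAC addrK.
apply: le_trans (qform_add_le _ _ Pi_sym Pi_psd eps_gt0) _; apply: lerD.
  have ctrl_sector : sqnorm (Su (K *m x) - al_u *: (K *m x)) <= be_u ^+ 2 * sqnorm (K *m x).
    by have := Su_sector (K *m x) 0; rewrite Su0 !subr0.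
  rewrite -mulrA ler_wpM2l ?addr_ge0 // mulrC ler_pdivlMr ?addr_gt0 // mulrC.
  exact: control_step ctrl_sector.
have dl_le : sqnorm dl <= cS * sqnorm (K *m e).
  by have := Su_sector (K *m xh) (K *m x); rewrite -mulmxBr => /sector_sqnorm_le.
have Ke_le : sqnorm (K *m e) <= cK * (mQ^-1 * qform Q e).
  by apply: le_trans (K_le e) _; rewrite ler_wpM2l // ler_pdivlMl.
have Bdl_le : qform Pi (B *m dl) <= MP * (cB * (cS * (cK * (mQ^-1 * qform Q e)))).
  apply: le_trans (Pi_le _) _; rewrite ler_wpM2l //; apply: le_trans (B_le _) _.
  by rewrite ler_wpM2l //; apply: le_trans dl_le _; rewrite ler_wpM2l.
have -> : (1 + eps^-1) * (MP * (cB * (cS * cK))) / mQ * qform Q e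
          = (1 + eps^-1) * (MP * (cB * (cS * (cK * (mQ^-1 * qform Q e))))) by ring.
by rewrite ler_wpM2l ?addr_ge0 ?invr_ge0.
Qed.

Lemma error_step_le x xh s :
  qform Q (A *m xh + B *m s + L *m (Sy (C *m xh + D *m s) - Sy (C *m x + D *m s))
           - (A *m x + B *m s))
  <= (1 - rho_o) * qform Q (xh - x).
Proof.
rewrite addrAC opprD addrACA subrr addr0 -mulmxBr; apply: observer_step.
have -> : C *m (xh - x) = C *m xh + D *m s - (C *m x + D *m s).
  by rewrite opprD addrACA subrr addr0 -mulmxBr.
exact: Sy_sector.
Qed.

Lemma lyapunov_sandwich gam : 0 < gam -> exists m M, [/\ 0 < m, 0 <= M & forall x e,
  m * (enorm x ^+ 2 + enorm e ^+ 2) <= qform Pi x + gam * qform Q e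
  <= M * (enorm x ^+ 2 + enorm e ^+ 2)].
Proof.
move=> gam_gt0; have [mP mP_gt0 Pi_ge] := qform_ge_sqnorm Pi_sym Pi_unit Pi_psd.
have [MP MP_gt0 Pi_le] := qform_le_sqnorm Pi.
have [mQ mQ_gt0 Q_ge] := qform_ge_sqnorm Q_sym Q_unit Q_psd.
have [MQ MQ_gt0 Q_le] := qform_le_sqnorm Q.
exists (Num.min mP (gam * mQ)), (MP + gam * MQ); split.
- by rewrite lt_min mP_gt0 mulr_gt0.
- by rewrite addr_ge0 ?mulr_ge0 ?ltW.
have mP_min : Num.min mP (gam * mQ) <= mP by rewrite ge_min lexx.
have mQ_min : Num.min mP (gam * mQ) <= gam * mQ by rewrite ge_min lexx orbT.
move=> x e; rewrite !enorm_sqr; apply/andP; split.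
  rewrite mulrDr; apply: lerD; first exact: le_trans (ler_wpM2r (sqnorm_ge0 x) mP_min) (Pi_ge x).
  apply: le_trans (ler_wpM2r (sqnorm_ge0 e) mQ_min) _.
  by rewrite -mulrA ler_wpM2l ?Q_ge // ltW.
apply: le_trans (_ : _ <= MP * sqnorm x + gam * (MQ * sqnorm e)) _.
  by apply: lerD; [exact: Pi_le | rewrite ler_wpM2l ?Q_le // ltW].
have := sqnorm_ge0 x; have := sqnorm_ge0 e; have := mulr_gt0 gam_gt0 MQ_gt0; nra.
Qed.

Theorem closed_loop_exp_stable : exists c lambda : R, 0 < c /\ 0 < lambda < 1 /\
  forall x xh, closed_loop x xh ->
  forall k, enorm (x k) + enorm (xh k - x k)
            <= c * lambda ^+ k * (enorm (x 0%N) + enorm (xh 0%N - x 0%N)).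
Proof.
have [b b_ge0 state_le] := state_step_le.
move: rho_c_gt0 rho_o_gt0 rho_o_lt1 => rc_gt0 ro_gt0 ro_lt1.
set a := (1 + rho_c / 2) / (1 + rho_c).
have a_ge0 : 0 <= a by rewrite divr_ge0 ?addr_ge0 ?divr_ge0 // ltW.
have a_lt1 : a < 1 by rewrite ltr_pdivrMr ?addr_gt0 // mul1r; lra.
set gam := 2 * b / rho_o + 1.
have gam_gt0 : 0 < gam by rewrite ltr_wpDl // divr_ge0 ?mulr_ge0 // ltW.
have gam_rho : 2 * b <= gam * (1 - (1 - rho_o)).
  by rewrite opprB addrC subrK /gam (mulrDl (2 * b / rho_o)) divfK ?gt_eqF // mul1r lerDl ltW.
set th := Num.max a ((1 + (1 - rho_o)) / 2).
have th_ge0 : 0 <= th by rewrite le_max a_ge0.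
have th_lt1 : th < 1 by rewrite gt_max a_lt1 /=; lra.
have [m [M [m_gt0 M_ge0 sandwich]]] := lyapunov_sandwich gam_gt0.
exists (2 * M / m + 1), ((1 + th) / 2); split; last split.
- by rewrite ltr_wpDl // divr_ge0 ?mulr_ge0 // ltW.
- by apply/andP; split; lra.
move=> x xh traj; apply: (@geometric_decay_sum_le _ _ _
  (fun k => qform Pi (x k) + gam * qform Q (xh k - x k))) => //.
- by move=> k; exact: enorm_ge0.
- by move=> k; exact: enorm_ge0.
- by move=> k; have /andP[] := sandwich (x k) (xh k - x k).
- by have /andP[] := sandwich (x 0%N) (xh 0%N - x 0%N).
move=> k; have [-> ->] := traj k.
by apply: cascade_step (state_le _ _) (error_step_le _ _ _); rewrite ?Pi_psd ?Q_psd //; lra.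
Qed.

End ClosedLoop.
Theorem mainTheorem6 (R : realType) (nx nu ny : nat)
  (A : 'M[R]_nx) (B : 'M[R]_(nx, nu)) (C : 'M[R]_(ny, nx)) (D : 'M[R]_(ny, nu))
  (mu_u nu_u mu_y nu_y : R)
  (P Y : 'M[R]_nx) (X : 'M[R]_(nu, nx)) (sigma rho_c : R)
  (Q U : 'M[R]_nx) (V : 'M[R]_(nx, ny)) (eta rho_o : R)
  (Su : 'cV[R]_nu -> 'cV[R]_nu) (Sy : 'cV[R]_ny -> 'cV[R]_ny) :
  0 < mu_u -> mu_u <= nu_u -> 0 < mu_y -> mu_y <= nu_y ->
  let alpha_u := (nu_u + mu_u) / 2 in
  let beta_u := (nu_u - mu_u) / 2 in
  let alpha_y := (nu_y + mu_y) / 2 in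
  let beta_y := (nu_y - mu_y) / 2 in
  (* LMI (a) *)
  posdef P -> 0 < sigma -> 0 < rho_c < 1 ->
  posdef (sym3 ((1 - rho_c) *: P - sigma *: (B *m B^T))
               (A *m Y + alpha_u *: (B *m X)) (0 : 'M[R]_(nx, nu))
               (Y^T + Y - P) (beta_u *: X^T) (sigma%:M : 'M[R]_nu)) ->
  (* LMI (b) *)
  posdef Q -> 0 < eta -> 0 < rho_o < 1 ->
  posdef (sym3 ((1 - rho_o) *: Q - eta *: (C^T *m C))
               (U *m A + alpha_y *: (V *m C))^T (0 : 'M[R]_(nx, ny))
               (U + U^T - Q) (beta_y *: V) (eta%:M : 'M[R]_ny)) ->
  let K := X *m invmx Y in
  let L := invmx U *m V in
  (* scaffolding nonlinearities *)
  C1 Su -> Su 0 = 0 ->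
  (forall v, spec_norm_le (jac Su v - alpha_u%:M) beta_u) ->
  C1 Sy ->
  (forall z, spec_norm_le (jac Sy z - alpha_y%:M) beta_y) ->
  exists c lambda : R, 0 < c /\ 0 < lambda < 1 /\
    forall (x xh : nat -> 'cV[R]_nx),
      (forall k,
         let u := K *m xh k in
         let y := Sy (C *m x k + D *m Su u) in
         let yh := Sy (C *m xh k + D *m Su u) in
         x k.+1 = A *m x k + B *m Su u /\
         xh k.+1 = A *m xh k + B *m Su u + L *m (yh - y)) ->
      forall k, enorm (x k) + enorm (xh k - x k)
                <= c * lambda ^+ k * (enorm (x 0%N) + enorm (xh 0%N - x 0%N)).
Proof.
move=> mu_u_gt0 mu_u_le mu_y_gt0 mu_y_le al_u be_u al_y be_y P_pd sigma_gt0 /andP[rho_c_gt0 _]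
  lmi_a Q_pd eta_gt0 /andP[rho_o_gt0 rho_o_lt1] lmi_b K L [Su_diff _] Su0 Su_jac [Sy_diff _] Sy_jac.
have be_u_ge0 : 0 <= be_u by rewrite divr_ge0 // subr_ge0.
have be_y_ge0 : 0 <= be_y by rewrite divr_ge0 // subr_ge0.
have [[P_sym _] [Q_sym _]] := (P_pd, Q_pd).
have [P_unit Q_unit] := (posdef_unitmx P_pd, posdef_unitmx Q_pd).
have P_psd v := posdef_qform_ge0 v P_pd; have Q_psd v := posdef_qform_ge0 v Q_pd.
have Y_unit : Y \in unitmx.
  apply: qform_gt0_unitmx => v /(sym3_qform_mid lmi_a).
  by rewrite qformB qformD qform_tr; have := P_psd v; lra.
have U_unit : U \in unitmx.
  apply: qform_gt0_unitmx => v /(sym3_qform_mid lmi_b).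
  by rewrite qformB qformD qform_tr; have := Q_psd v; lra.
have UL : U *m L = V by rewrite mulmxA mulmxV // mul1mx.
have Pi_sym : (invmx P)^T = invmx P by rewrite trmx_inv P_sym.
have Pi_unit : invmx P \in unitmx by rewrite unitmx_inv.
have Pi_psd v : 0 <= qform (invmx P) v by rewrite qform_invmx.
have control_step x d := lmi_control_step (x := x) (d := d) P_sym P_unit P_psd Y_unit
  sigma_gt0 be_u_ge0 (fun v => posdef_qform_ge0 v lmi_a).
have observer_step e d := lmi_observer_step (e := e) (d := d) UL eta_gt0 be_y_ge0
  (fun v => posdef_qform_ge0 v lmi_b).
exact: (closed_loop_exp_stable D Pi_sym Pi_unit Pi_psd Q_sym Q_unit Q_psd rho_c_gt0 rho_o_gt0
  rho_o_lt1 Su0 (jac_sector Su_diff Su_jac be_u_ge0) (jac_sector Sy_diff Sy_jac be_y_ge0)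
  control_step observer_step).
Qed.
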